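(* For $d\ge0$ let $\Phi_d(x):=\sum_{n\ge1}A_{d,n}x^{n-1}$ and let $\Phi(x):=\sum_{n\ge1}A_nx^{n-1}$. Then for all $x\ge0$, $\Phi_d(x)\to\Phi(x)$ as $d\to\infty$ (in $[0,\infty]$). Moreover, for all $d\ge0$ and $t\in[0,1)$ there exists $A=A(d,t)<\infty$ such that $\Phi_d(x)\le A$ for all $x\in[0,t]$.
   Context: Rooted unlabeled trees: $\mathcal{X}_0=\{\bullet\}$ consists of the trivial tree. For $d\ge1$, an element $t\in\mathcal{X}_d$ is a family $t=\{N_\tau\}_{\tau\in\mathcal{X}_{d-1}}$ of non-negative integers with finite support ($N_\tau$ is the number of children of the root whose subtree is $\tau$). The size is $|\bullet|=1$ and $|t|=1+\sum_\tau N_\tau|\tau|$. $A_{d,n}$ is the number of $t\in\mathcal{X}_d$ with $|t|=n$ (rooted unlabeled trees with $n$ nodes and depth at most $d$), and $A_n$ is the number of rooted unlabeled trees with $n$ nodes (with no depth restriction). *)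

From HB Require Import structures.
From Stdlib Require Import List Permutation.
From mathcomp Require Import all_boot all_order all_algebra.
From mathcomp Require Import finmap.
From mathcomp Require Import all_classical all_reals all_analysis.

Set Implicit Arguments.
Unset Strict Implicit.
Unset Printing Implicit Defensive.

Import Order.TTheory GRing.Theory Num.Theory.
Local Open Scope classical_set_scope.

Inductive rtree : Type := RNode : seq rtree -> rtree.

Fixpoint tsize (t : rtree) : nat :=
  let: RNode l := t in (sumn (map tsize l)).+1.

Fixpoint depth (t : rtree) : nat :=
  let: RNode l := t in foldr maxn 0 (map (fun c => (depth c).+1) l).

Inductive iso : rtree -> rtree -> Prop :=
  | iso_node (l1 l2 l2' : seq rtree) :
      Permutation l2 l2' -> Forall2 iso l1 l2' -> iso (RNode l1) (RNode l2).

Definition nb_classes (P : set rtree) : nat :=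
  #|` fset_set [set [set u | iso t u] | t in P] |.

Definition A_dn (d n : nat) : nat :=
  nb_classes [set t | tsize t = n /\ (depth t <= d)%N].

Definition A_n (n : nat) : nat := nb_classes [set t | tsize t = n].

Local Open Scope ring_scope.
Local Open Scope ereal_scope.

Definition Phi_d (R : realType) (d : nat) (x : R) : \bar R :=
  \sum_(1 <= n <oo) ((A_dn d n)%:R * x ^+ n.-1)%:E.

Definition Phi (R : realType) (x : R) : \bar R :=
  \sum_(1 <= n <oo) ((A_n n)%:R * x ^+ n.-1)%:E.

From Pilot Require Import Defs.
From HB Require Import structures.
From Stdlib Require Import List Permutation.
From mathcomp Require Import all_boot all_order all_algebra.
From mathcomp Require Import all_classical all_reals all_analysis.
From mathcomp Require Import finmap.
From mathcomp Require Import lra.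
Import Order.TTheory GRing.Theory Num.Theory.

Set Implicit Arguments.
Unset Strict Implicit.
Unset Printing Implicit Defensive.

(* Isomorphism classes are represented by canonical trees, whose children
   lists are recursively sorted for an arbitrary total order on [rtree], so
   A_{d,n} counts canonical trees of size n and depth <= d.  This count is
   nondecreasing in d and equals A_n once n <= d + 1 (the depth of a tree is
   smaller than its size); monotone convergence then gives Phi_d x --> Phi x.
   For the bound, fix t in [0, 1) and let W_d bound sum_c t^(|c|-1) over all
   finite families of distinct canonical trees of depth <= d.  A canonical tree
   is determined by the multiplicities m_k of its children k, so for depth
   <= d + 1 the sum is at most
     prod_k sum_m t^(m |k|) <= exp (sum_k t^|k| / (1 - t)) <= exp (t W_d / (1 - t)).
   The same injection into multiplicity vectors shows that there are finitely
   many canonical trees of a given size and depth. *)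

Definition rtree_ind_all (P : rtree -> Prop)
    (IH : forall l, List.Forall P l -> P (RNode l)) : forall t, P t :=
  fix F t := let: RNode l := t in
    IH l ((fix G l := match l return List.Forall P l with
                      | [::] => List.Forall_nil P
                      | c :: l' => List.Forall_cons c (F c) (G l') end) l).

Fixpoint rtree_encode (t : rtree) : GenTree.tree unit :=
  let: RNode l := t in GenTree.Node 0 (map rtree_encode l).

Fixpoint rtree_decode (g : GenTree.tree unit) : rtree :=
  if g is GenTree.Node _ l then RNode (map rtree_decode l) else RNode [::].

Lemma rtree_encodeK : cancel rtree_encode rtree_decode.
Proof.
elim/rtree_ind_all => l IH /=; congr RNode; rewrite -map_comp.
by elim: IH => //= c l' -> _ ->.
Qed.

HB.instance Definition _ := Countable.copy rtree (can_type rtree_encodeK).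

Lemma rtree_ind_mem (P : rtree -> Prop) :
  (forall l, {in l, forall c, P c} -> P (RNode l)) -> forall t, P t.
Proof.
move=> IH; elim/rtree_ind_all => l Hl; apply: IH.
elim: Hl => // c l' Pc _ IHl x; rewrite in_cons => /orP[/eqP -> // | ].
exact: IHl.
Qed.

Definition children (t : rtree) : seq rtree := let: RNode l := t in l.

Lemma tsize_RNode l : Defs.tsize (RNode l) = (\sum_(c <- l) Defs.tsize c).+1.
Proof. by rewrite /= sumnE big_map. Qed.

Lemma depth_RNode l : depth (RNode l) = \max_(c <- l) (depth c).+1.
Proof. by rewrite /=; elim: l => [|c l /= ->]; rewrite ?big_nil ?big_cons. Qed.

Lemma tsize_child l c : c \in l -> Defs.tsize c < Defs.tsize (RNode l).
Proof. by move=> cl; rewrite tsize_RNode ltnS (big_rem c) //= leq_addr. Qed.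

Lemma depth_child l c : c \in l -> (depth c).+1 <= depth (RNode l).
Proof. by move=> cl; rewrite depth_RNode (leq_bigmax_seq c). Qed.

Lemma depth_lt_tsize t : depth t < Defs.tsize t.
Proof.
elim/rtree_ind_mem: t => l IH; rewrite depth_RNode ltnS.
apply/bigmax_leqP_seq => c cl _.
exact: leq_trans (IH c cl) (tsize_child cl).
Qed.

Lemma size_lt_tsize t : size (children t) < Defs.tsize t.
Proof.
case: t => l; rewrite tsize_RNode ltnS -sum1_size.
by apply: leq_sum => -[l'] _; rewrite tsize_RNode.
Qed.

(** * Canonical representatives of isomorphism classes *)

Definition rtree_le (x y : rtree) := choice.pickle x <= choice.pickle y.

Lemma rtree_le_total : total rtree_le.
Proof. by move=> x y; apply: leq_total. Qed.

Lemma rtree_le_trans : transitive rtree_le.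
Proof. by move=> x y z; apply: leq_trans. Qed.

Lemma rtree_le_anti : antisymmetric rtree_le.
Proof. by move=> x y; rewrite /rtree_le -eqn_leq => /eqP/(pcan_inj choice.pickleK). Qed.

Lemma sort_rtree_leP (s1 s2 : seq rtree) :
  reflect (sort rtree_le s1 = sort rtree_le s2) (perm_eq s1 s2).
Proof. exact: (perm_sortP rtree_le_total rtree_le_trans rtree_le_anti). Qed.

Fixpoint tcanon (t : rtree) : rtree :=
  let: RNode l := t in RNode (sort rtree_le (map tcanon l)).

Lemma tcanon_RNode l : tcanon (RNode l) = RNode (sort rtree_le (map tcanon l)).
Proof. by []. Qed.

Definition canonical (t : rtree) := tcanon t = t.

Lemma Permutation_perm_eq (T : eqType) (s1 s2 : seq T) :
  Permutation s1 s2 -> perm_eq s1 s2.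
Proof.
elim=> // [x l l' _|x y l|l l' l'' _ H1 _ H2]; first by rewrite perm_cons.
  by rewrite -(cat1s x) -(cat1s y) perm_catCA.
exact: perm_trans H1 H2.
Qed.

Lemma perm_eq_map_Permutation (T U : eqType) (f : T -> U) (l1 l2 : seq T) :
  perm_eq (map f l1) (map f l2) ->
  exists2 l2', Permutation l2 l2' & map f l2' = map f l1.
Proof.
elim: l1 l2 => [|a l1 IH] l2 /=.
  by case: l2 => [|b l2] H; [exists [::] | move/perm_size: H].
move=> H; have /mapP[b bl2 fab] : f a \in map f l2 by rewrite -(perm_mem H) mem_head.
case/splitPr: bl2 H => p1 p2 H.
have /IH[l' Hp Hm] : perm_eq (map f l1) (map f (p1 ++ p2)).
  rewrite -(perm_cons (f a)); apply: perm_trans H _.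
  by rewrite !map_cat /= fab -cat1s perm_catCA.
exists (b :: l'); last by rewrite /= Hm fab.
exact: Permutation_trans (Permutation_sym (Permutation_middle p1 p2 b)) (perm_skip b Hp).
Qed.

Lemma iso_RNodeP l1 l2 :
  iso (RNode l1) (RNode l2) <->
  exists2 l2', Permutation l2 l2' & List.Forall2 iso l1 l2'.
Proof. by split=> [H|[l2' Hp Hf]]; [inversion H; exists l2' | exact: iso_node Hp Hf]. Qed.

Lemma iso_tcanon t u : iso t u <-> tcanon t = tcanon u.
Proof.
elim/rtree_ind_mem: t u => l1 IH [l2]; rewrite iso_RNodeP /=; split.
  case=> l2' Hp Hf; congr RNode; apply/sort_rtree_leP.
  have -> : map tcanon l1 = map tcanon l2'.
    elim: Hf IH => //= c c' l l' Hc _ IHl IH; congr cons.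
      by apply/(IH c (mem_head _ _)).
    by apply: IHl => x xl; apply: IH; rewrite in_cons xl orbT.
  by rewrite perm_sym; apply/perm_map/Permutation_perm_eq.
case=> /sort_rtree_leP/perm_eq_map_Permutation[l2' Hp Hm].
exists l2' => //.
elim: l1 l2' IH Hm {Hp} => [|c l1 IHl] [|c' l2'] IH //= [Hc Hm].
constructor; first by apply/(IH c (mem_head _ _)).
by apply: IHl Hm => x xl; apply: IH; rewrite in_cons xl orbT.
Qed.

Lemma tcanonK t : canonical (tcanon t).
Proof.
elim/rtree_ind_mem: t => l IH; rewrite /canonical !tcanon_RNode.
congr RNode; apply/sort_rtree_leP.
apply: perm_trans (perm_map _ (permEl (perm_sort _ _))) _.
by rewrite -map_comp; have /eq_in_map -> : {in l, tcanon \o tcanon =1 tcanon} := IH.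
Qed.

Lemma tsize_tcanon t : Defs.tsize (tcanon t) = Defs.tsize t.
Proof.
elim/rtree_ind_mem: t => l IH; rewrite tcanon_RNode !tsize_RNode.
by rewrite (perm_big _ (permEl (perm_sort _ _))) big_map; congr _.+1; apply: eq_big_seq.
Qed.

Lemma depth_tcanon t : depth (tcanon t) = depth t.
Proof.
elim/rtree_ind_mem: t => l IH; rewrite tcanon_RNode !depth_RNode.
rewrite (perm_big _ (permEl (perm_sort _ _))) big_map.
by apply: eq_big_seq => c /IH ->.
Qed.

Lemma canonical_sorted l : canonical (RNode l) -> sorted rtree_le l.
Proof. by rewrite /canonical tcanon_RNode => -[<-]; apply: (sort_sorted rtree_le_total). Qed.

Lemma canonical_child l c : canonical (RNode l) -> c \in l -> canonical c.
Proof.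
by rewrite /canonical tcanon_RNode => -[<-]; rewrite mem_sort => /mapP[c' _ ->]; apply: tcanonK.
Qed.

Lemma canonical_RNode_inj l1 l2 :
  canonical (RNode l1) -> canonical (RNode l2) ->
  {in l1 ++ l2, forall x, count_mem x l1 = count_mem x l2} -> l1 = l2.
Proof.
move=> /canonical_sorted s1 /canonical_sorted s2 cnt.
apply: (sorted_eq rtree_le_trans rtree_le_anti s1 s2).
by apply/allP => x /cnt /eqP.
Qed.

(** * Children multiplicities *)

Lemma sum_count_mem (T : eqType) (K l : seq T) (w : T -> nat) :
  uniq K -> {subset l <= K} ->
  \sum_(k <- K) count_mem k l * w k = \sum_(x <- l) w x.
Proof.
move=> uK; elim: l => [|x l IH] lK.
  by rewrite big_nil big1 // => k _; rewrite mul0n.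
have xK : x \in K by apply: lK; rewrite mem_head.
rewrite big_cons -IH => [|y yl]; last by apply: lK; rewrite in_cons yl orbT.
under eq_bigr do rewrite /= mulnDl.
rewrite big_split /= (big_rem x) //= eqxx mul1n big1_seq ?addn0 // => k /andP[_].
by rewrite mem_rem_uniq // => /andP[/= /negbTE]; rewrite eq_sym => ->.
Qed.

Section Multiplicities.

Variables (K : seq rtree) (N : nat).
Hypothesis K_uniq : uniq K.

Local Notation kth i := (nth (RNode [::]) K i).

Definition spanned (c : rtree) := {subset children c <= K} /\ Defs.tsize c <= N.

Definition mult_vector (c : rtree) : {ffun 'I_(size K) -> 'I_N.+1} :=
  [ffun i : 'I_(size K) => inord (count_mem (kth i) (children c))].

Lemma mult_vectorE c i :
  spanned c -> mult_vector c i = count_mem (kth i) (children c) :> nat.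
Proof.
case=> _ cN; rewrite ffunE inordK // ltnS.
exact: leq_trans (count_size _ _) (leq_trans (ltnW (size_lt_tsize c)) cN).
Qed.

Lemma tsize_mult_vector c : spanned c ->
  (Defs.tsize c).-1 = \sum_(i < size K) mult_vector c i * Defs.tsize (kth i).
Proof.
move=> cK; have /(sum_count_mem Defs.tsize K_uniq) : {subset children c <= K} := cK.1.
rewrite (big_nth (RNode [::])) big_mkord.
case: c cK => l cK; rewrite tsize_RNode /= => <-.
by apply: eq_bigr => i _; rewrite mult_vectorE.
Qed.

Lemma mult_vector_inj c1 c2 : canonical c1 -> canonical c2 ->
  spanned c1 -> spanned c2 -> mult_vector c1 = mult_vector c2 -> c1 = c2.
Proof.
case: c1 c2 => [l1] [l2] C1 C2 K1 K2 E; congr RNode.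
apply: canonical_RNode_inj C1 C2 _ => x x12.
have xK : x \in K by move: x12; rewrite mem_cat => /orP[/K1.1 | /K2.1].
have iK : index x K < size K by rewrite index_mem.
have := congr1 (fun f : {ffun _ -> 'I_N.+1} => nat_of_ord (f (Ordinal iK))) E.
by rewrite !mult_vectorE //= nth_index.
Qed.

End Multiplicities.

(** * Weight bounds *)

Section WeightBound.

Variable R : realType.
Local Open Scope ring_scope.

Definition weight (t : R) (c : rtree) : R := t ^+ (Defs.tsize c).-1.

Lemma mul_weight (t : R) c : t * weight t c = t ^+ Defs.tsize c.
Proof. by case: c => l; rewrite /weight /= exprS. Qed.

Definition weight_bounded (P : rtree -> Prop) (t B : R) :=
  forall s, uniq s -> {in s, forall c, P c} -> \sum_(c <- s) weight t c <= B.

Lemma weight_bounded_sub (P Q : rtree -> Prop) t B :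
  (forall c, Q c -> P c) -> weight_bounded P t B -> weight_bounded Q t B.
Proof. by move=> QP PB s us sQ; apply: PB => // c /sQ /QP. Qed.

Lemma weight_bounded_ge0 (P : rtree -> Prop) t B : weight_bounded P t B -> 0 <= B.
Proof. by move=> PB; have := PB [::] isT; rewrite big_nil; apply. Qed.

Lemma geometric_sum_le (y t : R) n : 0 <= y -> y <= t -> t < 1 ->
  \sum_(j < n) y ^+ j <= 1 + y / (1 - t).
Proof.
move=> y0 yt t1; set S := \sum_(j < n) y ^+ j.
have S0 : 0 <= S by apply: sumr_ge0 => j _; apply: exprn_ge0.
have yn : 0 <= y ^+ n by apply: exprn_ge0.
have := subrX1 y n; rewrite -/S => SE.
have Sy : S * (1 - y) <= 1 by nra.
have St : S * (1 - t) <= 1 by apply: le_trans Sy; nra.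
have t1' : 0 < 1 - t by lra.
rewrite -(ler_pM2r t1') mulrDl divfK ?mul1r; last by rewrite gt_eqF.
nra.
Qed.

Lemma sum_ffun_prod_le_expR (t : R) n N (w : 'I_n -> nat) :
  0 <= t -> t < 1 -> (forall i, (0 < w i)%N) ->
  \sum_(f : {ffun 'I_n -> 'I_N}) \prod_(i < n) t ^+ (f i * w i)
    <= expR ((\sum_(i < n) t ^+ w i) / (1 - t)).
Proof.
move=> t0 t1 w0.
rewrite -(bigA_distr_bigA (fun i (j : 'I_N) => t ^+ (j * w i))) mulr_suml expR_sum.
apply: ler_prod => i _; apply/andP; split.
  by apply: sumr_ge0 => j _; apply: exprn_ge0.
apply: le_trans (expR_ge1Dx _); under eq_bigr do rewrite mulnC exprM.
apply: geometric_sum_le; rewrite ?exprn_ge0 //.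
by case: (w i) (w0 i) => // k _; rewrite exprS ler_piMr // exprn_ile1 // ltW.
Qed.

Lemma sum_uniq_le_sum (T : finType) (s : seq T) (F : T -> R) :
  uniq s -> (forall x, 0 <= F x) -> \sum_(x <- s) F x <= \sum_x F x.
Proof.
move=> us F0; rewrite big_uniq // [leRHS](bigID (mem s)) /=.
by rewrite lerDl sumr_ge0.
Qed.

Lemma weight_bounded_children (P : rtree -> Prop) (t B : R) :
  0 <= t -> t < 1 -> weight_bounded P t B ->
  weight_bounded (fun c => canonical c /\ {in children c, forall x, P x}) t
    (expR (t * B / (1 - t))).
Proof.
move=> t0 t1 PB s us sP.
set K := undup (flatten (map children s)).
have sK c : c \in s -> {subset children c <= K}.
  by move=> cs x xc; rewrite mem_undup; apply/flattenP; exists (children c); rewrite ?map_f.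
have KP : {in K, forall k, P k}.
  by move=> k; rewrite mem_undup => /flattenP[_ /mapP[c cs ->]]; apply: (sP c cs).2.
set N := \max_(c <- s) Defs.tsize c.
have spanned_s c : c \in s -> spanned K N c.
  by move=> cs; split; [exact: sK | exact: leq_bigmax_seq].
pose G (f : {ffun 'I_(size K) -> 'I_N.+1}) :=
  \prod_(i < size K) t ^+ (f i * Defs.tsize (nth (RNode [::]) K i)).
have weightE c : c \in s -> weight t c = G (mult_vector K N c).
  move=> cs; rewrite /weight /G prodrXr.
  by rewrite (tsize_mult_vector (undup_uniq _) (spanned_s c cs)).
have sum_K : \sum_(i < size K) t ^+ Defs.tsize (nth (RNode [::]) K i) <= t * B.
  apply: le_trans (ler_wpM2l t0 (PB K (undup_uniq _) KP)).
  rewrite mulr_sumr (big_nth (RNode [::])) big_mkord.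
  by under [leRHS]eq_bigr do rewrite mul_weight.
rewrite (eq_big_seq _ weightE) -(big_map _ xpredT G).
apply: le_trans (sum_uniq_le_sum _ _) _.
- rewrite map_inj_in_uniq // => c1 c2 c1s c2s.
  have [[C1 _] [C2 _]] := (sP _ c1s, sP _ c2s).
  exact: mult_vector_inj C1 C2 (spanned_s _ c1s) (spanned_s _ c2s).
- by move=> f; apply: prodr_ge0 => i _; apply: exprn_ge0.
apply: le_trans (sum_ffun_prod_le_expR _ t0 t1 _) _; first by move=> i; case: nth.
by rewrite ler_expR ler_wpM2r // invr_ge0 subr_ge0 ltW.
Qed.

Lemma weight_bounded_depth d (t : R) : 0 <= t -> t < 1 ->
  exists B, weight_bounded (fun c => canonical c /\ (depth c <= d)%N) t B.
Proof.
move=> t0 t1; elim: d => [|d [B PB]].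
  have B0 : weight_bounded (fun => False) t 0.
    by case=> [|c s] _ sF; [rewrite big_nil | case: (sF c (mem_head _ _))].
  exists (expR (t * 0 / (1 - t))); apply: weight_bounded_sub (weight_bounded_children t0 t1 B0).
  by case=> l [Cl dl]; split=> // c /depth_child /leq_trans /(_ dl).
exists (expR (t * B / (1 - t))); apply: weight_bounded_sub (weight_bounded_children t0 t1 PB).
case=> l [Cl dl]; split=> // c cl; split; first exact: canonical_child Cl cl.
by rewrite -ltnS (leq_trans (depth_child cl) dl).
Qed.

End WeightBound.

(** * Counting isomorphism classes *)

Section Counting.

Local Open Scope classical_set_scope.
Local Open Scope ring_scope.

Definition canonical_trees d n :=
  [set c | canonical c /\ Defs.tsize c = n /\ (depth c <= d)%N].

Lemma finite_set_card_bounded (T : choiceType) (A : set T) M :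
  (forall B : {fset T}, [set` B] `<=` A -> (#|` B| <= M)%N) -> finite_set A.
Proof.
move=> AM; apply: contrapT => /(infinite_set_fset M.+1)[B /AM BM].
by rewrite ltnNge BM.
Qed.

Lemma sum_weight_canonical_trees (R : realType) d n (t : R) (B : {fset rtree}) :
  [set` B] `<=` canonical_trees d n ->
  (\sum_(c <- B) weight t c = #|` B|%:R * t ^+ n.-1)%R.
Proof.
move=> BA; rewrite (eq_big_seq (fun=> t ^+ n.-1)) => [|c /BA[_ [cn _]]]; last by rewrite /weight cn.
by rewrite big_const_seq count_predT iter_addr_0 mulr_natl.
Qed.

Lemma finite_canonical_over (S : set rtree) n : finite_set S ->
  finite_set [set c | (canonical c /\ (Defs.tsize c <= n)%N) /\ {in children c, forall x, S x}].
Proof.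
move=> finS; set K := enum_fset (fset_set S).
apply: (finite_set_card_bounded (M := #|{ffun 'I_(size K) -> 'I_n.+1}|)) => B BA.
have spanB c : c \in B -> spanned K n c.
  move=> /BA[[_ cn] cS]; split=> // x /cS Sx.
  by rewrite /K in_fset_set ?inE //; exact: mem_set.
rewrite -(size_map (mult_vector K n)) cardE uniq_leq_size // => [|f]; last by rewrite mem_enum.
rewrite map_inj_in_uniq ?fset_uniq // => c1 c2 c1B c2B.
have [[[C1 _] _] [[C2 _] _]] := (BA _ c1B, BA _ c2B).
exact: mult_vector_inj C1 C2 (spanB _ c1B) (spanB _ c2B).
Qed.

Lemma canonical_trees_finite d n : finite_set (canonical_trees d n).
Proof.
suff fin_le : finite_set [set c | canonical c /\ (Defs.tsize c <= n)%N /\ (depth c <= d)%N].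
  by apply: sub_finite_set fin_le => c [C [cn D]]; rewrite /= cn.
elim: d => [|d IH]; [move: (finite_set0 rtree) | move: IH] => /(finite_canonical_over n).
  by apply: sub_finite_set => -[l] [C [ln dl]]; split=> // c /depth_child /leq_trans/(_ dl).
apply: sub_finite_set => -[l] [C [ln dl]]; split=> // c cl.
split; first exact: canonical_child C cl.
split; first exact: ltnW (leq_trans (tsize_child cl) ln).
by rewrite -ltnS (leq_trans (depth_child cl) dl).
Qed.

Lemma iso_class t : [set u | iso t u] = [set u | tcanon u = tcanon t].
Proof. by apply: eq_set => u; apply/propext; rewrite iso_tcanon; split=> ->. Qed.

Lemma A_dn_card d n : A_dn d n = #|` fset_set (canonical_trees d n)|.
Proof.
rewrite /A_dn /nb_classes; pose cls c := [set u | tcanon u = c].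
have -> : [set [set u | iso t u] | t in [set t | Defs.tsize t = n /\ (depth t <= d)%N]]
    = cls @` canonical_trees d n.
  apply/seteqP; split => _ [t Ht <-].
    exists (tcanon t); last exact/esym/iso_class.
    by split; [exact: tcanonK | rewrite tsize_tcanon depth_tcanon].
  by case: Ht => Ct Htd; exists t => //; rewrite (iso_class t) Ct.
rewrite fset_set_image; last exact: canonical_trees_finite.
rewrite card_in_imfset //.
move=> c1 c2; rewrite !in_fset_set; try exact: canonical_trees_finite.
move=> /set_mem[C1 _] /set_mem[C2 _] E.
by have : cls c1 c1 := C1; rewrite E /cls /= C1.
Qed.

Lemma A_dn_le d d' n : (d <= d')%N -> (A_dn d n <= A_dn d' n)%N.
Proof.
move=> dd; rewrite !A_dn_card; apply: fsubset_leq_card.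
rewrite -fset_set_sub; try exact: canonical_trees_finite.
by move=> c [C [S D]]; split=> //; split=> //; apply: leq_trans dd.
Qed.

Lemma A_dn_A_n d n : (n <= d.+1)%N -> A_dn d n = A_n n.
Proof.
move=> nd; rewrite /A_dn /A_n; congr nb_classes; apply: eq_set => t.
apply/propext; split=> [[] // | tn]; split=> //.
by rewrite -ltnS (leq_trans (depth_lt_tsize t)) ?tn.
Qed.

Lemma partial_sum_A_dn_le (R : realType) d (t B : R) :
  weight_bounded (fun c => canonical c /\ (depth c <= d)%N) t B ->
  forall M, (\sum_(1 <= n < M) (A_dn d n)%:R * t ^+ n.-1 <= B)%R.
Proof.
move=> WB; case=> [|M]; first by rewrite big_geq // (weight_bounded_ge0 WB).
suff [s [us sC ->]] : exists s, [/\ uniq s,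
    {in s, forall c, (canonical c /\ (depth c <= d)%N) /\ (Defs.tsize c <= M)%N}
  & (\sum_(1 <= n < M.+1) (A_dn d n)%:R * t ^+ n.-1 = \sum_(c <- s) weight t c)%R].
  by apply: WB => // c /sC[].
elim: M => [|M [s [us sC sE]]]; first by exists [::]; rewrite big_geq ?big_nil.
have CF : [set` fset_set (canonical_trees d M.+1)] `<=` canonical_trees d M.+1.
  by move=> c; rewrite /= in_fset_set; [exact: set_mem | exact: canonical_trees_finite].
exists (s ++ fset_set (canonical_trees d M.+1)); split.
- rewrite cat_uniq us fset_uniq andbT; apply/hasPn => c /CF[_ [Mc _]].
  by apply/negP => /sC[_]; rewrite Mc ltnn.
- move=> c; rewrite mem_cat => /orP[/sC[Cd cM] | /CF[C [-> D]]] //.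
  by split; last exact: leqW.
- by rewrite big_nat_recr //= sE big_cat (sum_weight_canonical_trees _ CF) A_dn_card.
Qed.

End Counting.

(** * The generating functions *)

Section GeneratingFunctions.

Variable R : realType.
Local Open Scope classical_set_scope.
Local Open Scope ring_scope.
Local Open Scope ereal_scope.

Lemma term_ge0 (a n : nat) (x : R) : (0 <= x)%R -> 0 <= (a%:R * x ^+ n)%:E.
Proof. by move=> x0; rewrite lee_fin mulr_ge0 ?exprn_ge0. Qed.

Lemma le_Phi_d_depth d d' (x : R) : (0 <= x)%R -> (d <= d')%N -> Phi_d d x <= Phi_d d' x.
Proof.
move=> x0 dd; apply: lee_nneseries => [n _ _ | n _]; first exact: term_ge0.
by rewrite lee_fin ler_wpM2r ?exprn_ge0 // ler_nat A_dn_le.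
Qed.

Lemma le_Phi_d_arg d (x y : R) : (0 <= x)%R -> (x <= y)%R -> Phi_d d x <= Phi_d d y.
Proof.
move=> x0 xy; apply: lee_nneseries => [n _ _ | n _]; first exact: term_ge0.
by rewrite lee_fin ler_wpM2l // lerXn2r // nnegrE // (le_trans x0 xy).
Qed.

Lemma Phi_d_le_Phi d (x : R) : (0 <= x)%R -> Phi_d d x <= Phi x.
Proof.
move=> x0; apply: lee_nneseries => [n _ _ | n _]; first exact: term_ge0.
rewrite lee_fin ler_wpM2r ?exprn_ge0 // ler_nat -(@A_dn_A_n (maxn d n)).
  by rewrite A_dn_le ?leq_maxl.
by rewrite leqW ?leq_maxr.
Qed.

Lemma Phi_d_cvg (x : R) : (0 <= x)%R -> Phi_d d x @[d --> \oo] --> Phi x.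
Proof.
move=> x0; suff <- : ereal_sup (range (fun d => Phi_d d x)) = Phi x.
  by apply: ereal_nondecreasing_cvgn => d d'; exact: le_Phi_d_depth.
apply/le_anti/andP; split.
  by apply: ge_ereal_sup => _ [d _ <-]; exact: Phi_d_le_Phi.
apply: lime_le; first by apply: is_cvg_nneseries => n _ _; exact: term_ge0.
apply: nearW => M; apply: le_ereal_sup_tmp; exists (Phi_d M x); first by exists M.
apply: le_trans (nneseries_lim_ge M _) => [|n _ _]; last exact: term_ge0.
rewrite big_nat_cond [leRHS]big_nat_cond; apply: lee_sum => n /andP[/andP[_ nM] _].
by rewrite A_dn_A_n // leqW // ltnW.
Qed.

Lemma Phi_d_bounded d (t : R) : (0 <= t)%R -> (t < 1)%R ->
  exists A : R, forall x : R, (0 <= x)%R -> (x <= t)%R -> Phi_d d x <= A%:E.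
Proof.
move=> t0 t1; have [B WB] := weight_bounded_depth d t0 t1.
exists B => x x0 xt; apply: le_trans (le_Phi_d_arg d x0 xt) _.
apply: lime_le; first by apply: is_cvg_nneseries => n _ _; exact: term_ge0.
by apply: nearW => M; rewrite sumEFin lee_fin partial_sum_A_dn_le.
Qed.

End GeneratingFunctions.

Local Open Scope classical_set_scope.
Local Open Scope ring_scope.

Theorem proposition2 (R : realType) :
  (forall x : R, 0 <= x -> Phi_d d x @[d --> \oo] --> Phi x) /\
  (forall (d : nat) (t : R), 0 <= t -> t < 1 ->
     exists A : R, forall x : R, 0 <= x -> x <= t -> (Phi_d d x <= A%:E)%E).
Proof. by split; [exact: Phi_d_cvg | exact: Phi_d_bounded]. Qed.
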